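(* Let $I\in\mathbb S$ and $\xi\in\mathbb{O}$. Then: (1) $N(g_{I,\xi})(x)=|\Delta_{\xi_I}(x)|^2+2|\xi_I^\perp|^2\big(|x|^2-2\mathrm{Re}(x)\mathrm{Re}(\xi_I)+|\xi_I|^2\big)+|\xi_I^\perp|^4\ge0$ for every $x\in\mathbb{O}$; (2) the zero set of $N(g_{I,\xi})$ equals $\mathbb S_{I,\xi}$.
   Context: Octonions $\mathbb{O}=\mathbb{H}+\ell\mathbb{H}$ (product $(a+\ell b)(c+\ell d)=(ac-d\bar b)+\ell(\bar a d+cb)$, conjugation $\overline{a+\ell b}=\bar a-\ell b$), identified with $\mathbb{R}^8$ with Euclidean norm; $\mathrm{Re}(x)=\frac12(x+\bar x)$, $\mathrm{Im}(x)=\frac12(x-\bar x)$; $\mathbb S=\{I:I^2=-1\}$, $\mathbb C_I=\mathrm{Span}_{\mathbb R}(1,I)$. Slice functions on $\mathbb{O}$: $f(\alpha+\beta J)=F_1(\alpha,\beta)+JF_2(\alpha,\beta)$ ($J\in\mathbb S$) for a stem function $(F_1,F_2):\mathbb{R}^2\to\mathbb{O}^2$, $F_1$ even and $F_2$ odd in $\beta$. The slice product $f\cdot g$ of slice functions induced by $(F_1,F_2),(G_1,G_2)$ is induced by $(F_1G_1-F_2G_2,F_1G_2+F_2G_1)$; $f^c$ is induced by $(\overline{F_1},\overline{F_2})$; the normal function is $N(f)=f\cdot f^c$. For $\eta\in\mathbb{O}$, $\Delta_\eta(x)=x^2-2x\mathrm{Re}(\eta)+|\eta|^2$ and $\mathbb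 S_\eta=\{\mathrm{Re}(\eta)+J|\mathrm{Im}(\eta)|:J\in\mathbb S\}$. For $\xi\in\mathbb{O}$: $\xi_I$ is the orthogonal projection of $\xi$ onto $\mathbb C_I$, $\xi_I^\perp=\xi-\xi_I$, $g_{I,\xi}:\mathbb{O}\to\mathbb{O}$ is the slice function $g_{I,\xi}(x)=|x|^2-x\overline{\xi_I}-\overline{x}\xi_I+|\xi|^2$ (equal to $(\xi_I-x)\cdot(\overline{\xi_I}-\overline x)+|\xi_I^\perp|^2$), and $\mathbb S_{I,\xi}=\mathbb S_\xi$ if $\xi\in\mathbb C_I$, $\mathbb S_{I,\xi}=\emptyset$ otherwise. *)

From mathcomp Require Import all_boot all_order all_algebra.
Set Implicit Arguments. Unset Strict Implicit. Unset Printing Implicit Defensive.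
Import Order.TTheory GRing.Theory Num.Theory.
Local Open Scope ring_scope.

Section Oct.
Variable R : rcfType.

(* Quaternions H = R^4 with basis 1, i, j, k. *)
Record quat := Quat { q0 : R; q1 : R; q2 : R; q3 : R }.

Definition qadd (a b : quat) :=
  Quat (q0 a + q0 b) (q1 a + q1 b) (q2 a + q2 b) (q3 a + q3 b).
Definition qopp (a : quat) := Quat (- q0 a) (- q1 a) (- q2 a) (- q3 a).
Definition qmul (a b : quat) :=
  Quat (q0 a * q0 b - q1 a * q1 b - q2 a * q2 b - q3 a * q3 b)
       (q0 a * q1 b + q1 a * q0 b + q2 a * q3 b - q3 a * q2 b)
       (q0 a * q2 b - q1 a * q3 b + q2 a * q0 b + q3 a * q1 b)
       (q0 a * q3 b + q1 a * q2 b - q2 a * q1 b + q3 a * q0 b).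
Definition qconj (a : quat) := Quat (q0 a) (- q1 a) (- q2 a) (- q3 a).
Definition qreal (r : R) := Quat r 0 0 0.

(* Octonions O = H + l H, the pair (a, b) standing for a + l b. *)
Record oct := Oct { oa : quat; ob : quat }.

Definition oadd (x y : oct) := Oct (qadd (oa x) (oa y)) (qadd (ob x) (ob y)).
Definition oopp (x : oct) := Oct (qopp (oa x)) (qopp (ob x)).
Definition osub (x y : oct) := oadd x (oopp y).
(* (a + l b)(c + l d) = (ac - d conj(b)) + l (conj(a) d + c b) *)
Definition omul (x y : oct) :=
  Oct (qadd (qmul (oa x) (oa y)) (qopp (qmul (ob y) (qconj (ob x)))))
      (qadd (qmul (qconj (oa x)) (ob y)) (qmul (oa y) (ob x))).
Definition oconj (x : oct) := Oct (qconj (oa x)) (qopp (ob x)).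
Definition oreal (r : R) := Oct (qreal r) (qreal 0).
Definition oscale (r : R) (x : oct) := omul (oreal r) x.
Definition ozero := oreal 0.

Definition ocoords (x : oct) : seq R :=
  [:: q0 (oa x); q1 (oa x); q2 (oa x); q3 (oa x);
      q0 (ob x); q1 (ob x); q2 (ob x); q3 (ob x)].
Definition odot (x y : oct) : R :=
  \sum_(i < 8) nth 0 (ocoords x) i * nth 0 (ocoords y) i.
Definition onorm (x : oct) : R := Num.sqrt (odot x x).

Definition oRe (x : oct) := oscale (2^-1) (oadd x (oconj x)).
Definition oIm (x : oct) := oscale (2^-1) (osub x (oconj x)).
Definition reR (x : oct) : R := q0 (oa (oRe x)).

Definition Sph : oct -> Prop := fun I => omul I I = oreal (-1).
Definition inCI (I x : oct) : Prop := exists a b : R, x = oadd (oreal a) (oscale b I).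

Definition Delta (eta x : oct) :=
  oadd (osub (omul x x) (omul x (oscale 2 (oRe eta)))) (oreal (onorm eta ^+ 2)).
Definition Seta (eta : oct) : oct -> Prop := fun y =>
  exists J, Sph J /\ y = oadd (oRe eta) (omul J (oreal (onorm (oIm eta)))).

(* xi_I : orthogonal projection of xi onto C_I; for I in S, (1, I) is an
   orthonormal basis of C_I, so the projection is <xi,1> 1 + <xi,I> I. *)
Definition projI (I xi : oct) := oadd (oreal (odot xi (oreal 1))) (oscale (odot xi I) I).
Definition perpI (I xi : oct) := osub xi (projI I xi).

Definition gIxi (I xi : oct) (x : oct) :=
  oadd (osub (osub (oreal (onorm x ^+ 2)) (omul x (oconj (projI I xi))))
             (omul (oconj x) (projI I xi)))
       (oreal (onorm xi ^+ 2)).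

Definition SIxi (I xi : oct) : oct -> Prop := fun y => inCI I xi /\ Seta xi y.

Definition stem (F1 F2 : R -> R -> oct) : Prop :=
  (forall a b, F1 a (- b) = F1 a b) /\ (forall a b, F2 a (- b) = oopp (F2 a b)).

Definition induced (f : oct -> oct) (F1 F2 : R -> R -> oct) : Prop :=
  forall (a b : R) (J : oct), Sph J ->
    f (oadd (oreal a) (oscale b J)) = oadd (F1 a b) (omul J (F2 a b)).

(* The slice function induced by (F1, F2), as an explicit function:
   x = Re x + |Im x| J with J = Im x / |Im x| when x is not real. *)
Definition slice (F1 F2 : R -> R -> oct) (x : oct) : oct :=
  let b := onorm (oIm x) in
  if b == 0 then F1 (reR x) 0
  else oadd (F1 (reR x) b) (omul (oscale b^-1 (oIm x)) (F2 (reR x) b)).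

(* stem of the slice product f . g : (F1 G1 - F2 G2, F1 G2 + F2 G1) *)
Definition sprod1 (F1 F2 G1 G2 : R -> R -> oct) a b :=
  osub (omul (F1 a b) (G1 a b)) (omul (F2 a b) (G2 a b)).
Definition sprod2 (F1 F2 G1 G2 : R -> R -> oct) a b :=
  oadd (omul (F1 a b) (G2 a b)) (omul (F2 a b) (G1 a b)).
Definition cstem (F : R -> R -> oct) a b := oconj (F a b).

Definition normalf (F1 F2 : R -> R -> oct) : oct -> oct :=
  slice (sprod1 F1 F2 (cstem F1) (cstem F2)) (sprod2 F1 F2 (cstem F1) (cstem F2)).

End Oct.

(* The function g_{I,xi} is induced by the stem (a^2 + b^2 - 2 a Re c + |xi|^2, 2 b Im c), c = xi_I,
   and a stem is determined by its slice function (evaluate at a + b I and a - b I; left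
   multiplication by I is injective by alternativity).  Since the first component is real,
   N(g)(x) = Q(x)^2 - 4 |Im x|^2 |Im c|^2 with Q(x) = |x|^2 - 2 Re x Re c + |xi|^2.
   Pythagoras |xi|^2 = |c|^2 + |xi_I^perp|^2 together with the identity
   |Delta_c(x)|^2 = (|x|^2 - 2 Re x Re c + |c|^2)^2 - 4 |Im x|^2 |Im c|^2 gives (1).
   For (2) write N(g)(x) = (u + B + S + P)^2 - 4 B S with the nonnegative quantities
   u = (Re x - Re c)^2, B = |Im x|^2, S = |Im c|^2, P = |xi_I^perp|^2: it vanishes iff
   u = P = 0 and B = S, i.e. xi lies in C_I and x lies on the sphere S_xi. *)

From mathcomp Require Import all_boot all_order all_algebra.
From mathcomp Require Import ring lra.
Import Order.TTheory GRing.Theory Num.Theory.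
Local Open Scope ring_scope.
Set Implicit Arguments. Unset Strict Implicit. Unset Printing Implicit Defensive.

Ltac oct_unfold := cbv beta iota delta [omul oadd oopp oconj osub oscale oreal ozero
  qadd qmul qconj qopp qreal oa ob q0 q1 q2 q3].
Ltac oct_congr := congr (Oct (Quat _ _ _ _) (Quat _ _ _ _)).
Ltac oct_ring := oct_unfold; oct_congr; ring.
Ltac oct_case x := case: x => [[? ? ? ?] [? ? ? ?]].

Section Octonions.
Variable R : rcfType.
Implicit Types (x y c xi I J : oct R) (a b : R).

Definition im_sqnorm x : R := q1 (oa x) ^+ 2 + q2 (oa x) ^+ 2 + q3 (oa x) ^+ 2
  + q0 (ob x) ^+ 2 + q1 (ob x) ^+ 2 + q2 (ob x) ^+ 2 + q3 (ob x) ^+ 2.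

Lemma odotE x y : odot x y =
  q0 (oa x) * q0 (oa y) + q1 (oa x) * q1 (oa y) + q2 (oa x) * q2 (oa y) + q3 (oa x) * q3 (oa y)
  + q0 (ob x) * q0 (ob y) + q1 (ob x) * q1 (ob y) + q2 (ob x) * q2 (ob y) + q3 (ob x) * q3 (ob y).
Proof. by rewrite /odot !big_ord_recl big_ord0 /=; ring. Qed.

Lemma oReE x : oRe x = oreal (q0 (oa x)).
Proof. by oct_case x; rewrite /oRe; oct_unfold; oct_congr; field. Qed.

Lemma reRE x : reR x = q0 (oa x).
Proof. by rewrite /reR oReE. Qed.

Lemma oImE x : oIm x = Oct (Quat 0 (q1 (oa x)) (q2 (oa x)) (q3 (oa x))) (ob x).
Proof. by oct_case x; rewrite /oIm; oct_unfold; oct_congr; field. Qed.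

Lemma odot_selfE x : odot x x = reR x ^+ 2 + im_sqnorm x.
Proof. by rewrite odotE reRE /im_sqnorm; ring. Qed.

Lemma odot_oIm x : odot (oIm x) (oIm x) = im_sqnorm x.
Proof. by rewrite oImE odotE /im_sqnorm /=; ring. Qed.

Lemma im_sqnorm_ge0 x : 0 <= im_sqnorm x.
Proof. by rewrite /im_sqnorm !addr_ge0 ?sqr_ge0. Qed.

Lemma odot_self_ge0 x : 0 <= odot x x.
Proof. by rewrite odot_selfE addr_ge0 ?sqr_ge0 ?im_sqnorm_ge0. Qed.

Lemma onorm_sqr x : onorm x ^+ 2 = odot x x.
Proof. by rewrite /onorm sqr_sqrtr ?odot_self_ge0. Qed.

Lemma oreal_inj : injective (@oreal R).
Proof. by move=> a b []. Qed.

Lemma odot_self_eq0 x : odot x x = 0 -> x = ozero R.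
Proof.
case: x => [[x0 x1 x2 x3] [x4 x5 x6 x7]]; rewrite odotE -!expr2 /= => h.
have := sqr_ge0 x0; have := sqr_ge0 x1; have := sqr_ge0 x2; have := sqr_ge0 x3.
have := sqr_ge0 x4; have := sqr_ge0 x5; have := sqr_ge0 x6; have := sqr_ge0 x7.
by move=> *; oct_unfold; oct_congr; apply/eqP; rewrite -sqrf_eq0; apply/eqP; lra.
Qed.

Lemma im_sqnorm_eq0 x : im_sqnorm x = 0 -> x = oreal (reR x).
Proof.
case: x => [[x0 x1 x2 x3] [x4 x5 x6 x7]]; rewrite reRE /im_sqnorm /= => h.
have := sqr_ge0 x1; have := sqr_ge0 x2; have := sqr_ge0 x3.
have := sqr_ge0 x4; have := sqr_ge0 x5; have := sqr_ge0 x6; have := sqr_ge0 x7.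
by move=> *; oct_unfold; oct_congr => //; apply/eqP; rewrite -sqrf_eq0; apply/eqP; lra.
Qed.

Lemma SphE J : Sph J <-> reR J = 0 /\ im_sqnorm J = 1.
Proof.
rewrite reRE /im_sqnorm /Sph; case: J => [[j0 j1 j2 j3] [j4 j5 j6 j7]] /=.
split=> [|[-> h1]]; last by oct_unfold; oct_congr; lra.
oct_unfold; case=> e0 e1 e2 e3 e4 e5 e6 e7.
have sum1 : j1 ^+ 2 + j2 ^+ 2 + j3 ^+ 2 + j4 ^+ 2 + j5 ^+ 2 + j6 ^+ 2 + j7 ^+ 2 = 1 + j0 ^+ 2.
  by move: e0; rewrite !expr2; lra.
have mul0 k e : e = 0 -> e = 2 * (j0 * k) -> j0 * k = 0.
  by move=> -> /eqP; rewrite eq_sym mulf_eq0 pnatr_eq0 => /eqP.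
have m1 := mul0 j1 _ e1 ltac:(ring).
have m2 := mul0 j2 _ e2 ltac:(ring).
have m3 := mul0 j3 _ e3 ltac:(ring).
have m4 := mul0 j4 _ e4 ltac:(ring).
have m5 := mul0 j5 _ e5 ltac:(ring).
have m6 := mul0 j6 _ e6 ltac:(ring).
have m7 := mul0 j7 _ e7 ltac:(ring).
suff j0_0 : j0 = 0 by split=> //; move: sum1; rewrite j0_0; lra.
have : j0 ^+ 2 * (1 + j0 ^+ 2) = 0.
  rewrite -sum1; transitivity ((j0 * j1) ^+ 2 + (j0 * j2) ^+ 2 + (j0 * j3) ^+ 2
    + (j0 * j4) ^+ 2 + (j0 * j5) ^+ 2 + (j0 * j6) ^+ 2 + (j0 * j7) ^+ 2); first ring.
  by rewrite m1 m2 m3 m4 m5 m6 m7; ring.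
move/eqP; rewrite mulf_eq0 sqrf_eq0 => /orP[/eqP //|].
by rewrite paddr_eq0 ?sqr_ge0 // oner_eq0.
Qed.

Lemma Sph_oopp J : Sph J -> Sph (oopp J).
Proof. by rewrite /Sph => <-; oct_case J; oct_ring. Qed.

Lemma omul_oppl x y : omul (oopp x) y = oopp (omul x y).
Proof. by oct_case x; oct_case y; oct_ring. Qed.

Lemma omul_altl x y : omul x (omul x y) = omul (omul x x) y.
Proof. by oct_case x; oct_case y; oct_ring. Qed.

Lemma Sph_omul_inj I : Sph I -> injective (omul I).
Proof.
move=> SI y z /(congr1 (omul I)); rewrite !omul_altl SI.
have omul_m1 u : omul (oreal (-1)) u = oopp u by oct_case u; oct_ring.
by rewrite !omul_m1 => /(congr1 (@oopp R)); oct_case y; oct_case z; oct_unfold; rewrite !opprK.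
Qed.

Lemma oadd_osub_inj x y x' y' :
  oadd x y = oadd x' y' -> osub x y = osub x' y' -> x = x' /\ y = y'.
Proof.
oct_case x; oct_case y; oct_case x'; oct_case y'; oct_unfold.
by move=> e f; case: f; case: e => *; split; oct_congr; lra.
Qed.

Lemma induced_uniq (g : oct R -> oct R) F1 F2 H1 H2 I : Sph I ->
  induced g F1 F2 -> induced g H1 H2 -> forall a b, F1 a b = H1 a b /\ F2 a b = H2 a b.
Proof.
move=> SI gF gH a b.
have SmI := Sph_oopp SI.
have eI := etrans (esym (gF a b I SI)) (gH a b I SI).
have emI := etrans (esym (gF a b _ SmI)) (gH a b _ SmI).
rewrite !omul_oppl in emI.
have [-> e2] := oadd_osub_inj eI emI.
by split=> //; apply: (Sph_omul_inj SI).
Qed.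

Lemma normalf_ext F1 F2 H1 H2 x :
  (forall a b, F1 a b = H1 a b) -> (forall a b, F2 a b = H2 a b) ->
  normalf F1 F2 x = normalf H1 H2 x.
Proof.
by move=> e1 e2; rewrite /normalf /slice /sprod1 /sprod2 /cstem; lazy zeta; rewrite !e1 !e2.
Qed.

Lemma slice_stem2_eq0 F1 F2 x : (forall a b, F2 a b = ozero R) ->
  slice F1 F2 x = F1 (reR x) (onorm (oIm x)).
Proof.
rewrite /slice => F2_0; case: eqP => [->|_] //; rewrite F2_0.
by move: (F1 _ _) (oscale _ _) => u y; oct_case u; oct_case y; oct_ring.
Qed.

Lemma odot_slice J a b : Sph J ->
  odot (oadd (oreal a) (oscale b J)) (oadd (oreal a) (oscale b J)) = a ^+ 2 + b ^+ 2.
Proof.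
case/SphE; rewrite reRE /im_sqnorm; case: J => [[j0 j1 j2 j3] [j4 j5 j6 j7]] /= -> h1.
by rewrite odotE -[b ^+ 2]mulr1 -h1; oct_unfold; ring.
Qed.

(* With c = xi_I and X = |xi|^2 this is the stem of (c - x).(conj c - conj x) + |xi_I^perp|^2. *)
Definition gstem1 c (X a b : R) := oreal (a ^+ 2 + b ^+ 2 - 2 * a * reR c + X).
Definition gstem2 c (a b : R) := oscale b (osub c (oconj c)).

Lemma gstem_stem c X : stem (gstem1 c X) (gstem2 c).
Proof. by split=> a b; rewrite /gstem1 /gstem2 ?sqrrN //; oct_case c; oct_ring. Qed.

Lemma gIxi_induced I xi :
  induced (gIxi I xi) (gstem1 (projI I xi) (odot xi xi)) (gstem2 (projI I xi)).
Proof.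
move=> a b J SJ; rewrite /gIxi !onorm_sqr odot_slice //.
have [+ _] := (SphE J).1 SJ; rewrite /gstem1 /gstem2 !reRE.
move: (projI I xi) (odot xi xi) => c X.
by case: J {SJ} => [[j0 j1 j2 j3] [j4 j5 j6 j7]] /= ->; oct_case c; oct_ring.
Qed.

Lemma normalf_gstem c X x : normalf (gstem1 c X) (gstem2 c) x =
  oreal ((odot x x - 2 * reR x * reR c + X) ^+ 2 - 4 * im_sqnorm x * im_sqnorm c).
Proof.
rewrite /normalf slice_stem2_eq0 => [|a b]; last first.
  by rewrite /sprod2 /cstem /gstem1 /gstem2; oct_case c; oct_ring.
have sprod1E a b : sprod1 (gstem1 c X) (gstem2 c) (cstem (gstem1 c X)) (cstem (gstem2 c)) a b
    = oreal ((a ^+ 2 + b ^+ 2 - 2 * a * reR c + X) ^+ 2 - 4 * b ^+ 2 * im_sqnorm c).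
  by rewrite /sprod1 /cstem /gstem1 /gstem2 /im_sqnorm reRE; oct_case c; oct_ring.
by rewrite sprod1E onorm_sqr odot_oIm odot_selfE.
Qed.

Lemma odot_Delta c x : odot (Delta c x) (Delta c x) =
  (odot x x - 2 * reR x * reR c + odot c c) ^+ 2 - 4 * im_sqnorm x * im_sqnorm c.
Proof.
rewrite /Delta onorm_sqr oReE !reRE /im_sqnorm.
by oct_case c; oct_case x; rewrite !odotE; oct_unfold; ring.
Qed.

Lemma odot_re_crossE x c : odot x x - 2 * reR x * reR c + odot c c =
  (reR x - reR c) ^+ 2 + im_sqnorm x + im_sqnorm c.
Proof. by rewrite !odot_selfE; ring. Qed.

Lemma odot_projI_perpI I xi : Sph I ->
  odot xi xi = odot (projI I xi) (projI I xi) + odot (perpI I xi) (perpI I xi).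
Proof.
case/SphE => re0 im1.
suff -> : odot (projI I xi) (projI I xi) + odot (perpI I xi) (perpI I xi)
          = odot xi xi + 2 * odot xi I ^+ 2 * (im_sqnorm I - 1).
  by rewrite im1 subrr mulr0 addr0.
move: re0; rewrite /perpI /projI reRE /im_sqnorm !odotE.
by case: I {im1} => [[i0 i1 i2 i3] [i4 i5 i6 i7]] /= ->; oct_case xi; oct_unfold; ring.
Qed.

Lemma odot_perpI_eq0 I xi : odot (perpI I xi) (perpI I xi) = 0 <-> projI I xi = xi.
Proof.
rewrite /perpI; move: (projI I xi) => c; split=> [/odot_self_eq0|->].
  by oct_case c; oct_case xi; oct_unfold; move=> e; case: e => *; oct_congr; lra.
by oct_case xi; rewrite odotE; oct_unfold; ring.
Qed.

Lemma projI_idP I xi : Sph I -> projI I xi = xi <-> inCI I xi.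
Proof.
move=> SI; split=> [<-|[a [b ->]]]; first by exists (odot xi (oreal 1)), (odot xi I).
have [re0 im1] := (SphE I).1 SI.
suff -> : projI I (oadd (oreal a) (oscale b I))
          = oadd (oreal a) (oscale (b * im_sqnorm I) I) by rewrite im1 mulr1.
move: re0; rewrite /projI reRE /im_sqnorm !odotE.
by case: I {SI im1} => [[i0 i1 i2 i3] [i4 i5 i6 i7]] /= ->; oct_ring.
Qed.

(* Sph J0 only serves to make S nonempty, which is needed when Im xi = 0. *)
Lemma SetaP J0 xi x : Sph J0 ->
  Seta xi x <-> reR x = reR xi /\ im_sqnorm x = im_sqnorm xi.
Proof.
move=> SJ0; have s2 : onorm (oIm xi) ^+ 2 = im_sqnorm xi by rewrite onorm_sqr odot_oIm.
rewrite /Seta -s2; move: (onorm (oIm xi)) {s2} => s; split.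
  case=> J [/SphE[re0 im1] ->].
  have [-> ->] : reR (oadd (oRe xi) (omul J (oreal s))) = reR xi + reR J * s /\
                 im_sqnorm (oadd (oRe xi) (omul J (oreal s))) = s ^+ 2 * im_sqnorm J.
    rewrite !reRE oReE /im_sqnorm; clear re0 im1.
    by oct_case J; oct_case xi; split; oct_unfold; ring.
  by rewrite re0 im1 mul0r addr0 mulr1.
case=> hre him; have [s0|s_neq0] := eqVneq s 0.
  exists J0; split=> //; rewrite oReE -reRE -hre {1}(im_sqnorm_eq0 _ : x = _).
    by rewrite s0; clear SJ0; oct_case J0; oct_ring.
  by rewrite him s0 expr0n.
exists (oscale s^-1 (oIm x)); split.
  apply/SphE; split; first by rewrite reRE oImE; oct_unfold; ring.
  have -> : im_sqnorm (oscale s^-1 (oIm x)) = s^-1 ^+ 2 * im_sqnorm x.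
    by rewrite /im_sqnorm oImE; oct_unfold; ring.
  by rewrite him -exprMn mulVf // expr1n.
rewrite oReE -reRE -hre reRE oImE.
by clear hre him; oct_case x; oct_unfold; oct_congr; field.
Qed.

End Octonions.

Lemma sqr_sum4_eq_4mul (R : realFieldType) (u B S P : R) :
  0 <= u -> 0 <= B -> 0 <= S -> 0 <= P -> (u + B + S + P) ^+ 2 = 4 * B * S ->
  [/\ u = 0, P = 0 & B = S].
Proof.
move=> u_ge0 B_ge0 S_ge0 P_ge0 E.
have E' : (u + P) ^+ 2 + 2 * (u + P) * (B + S) + (B - S) ^+ 2
          = (u + B + S + P) ^+ 2 - 4 * B * S by ring.
rewrite E subrr in E'.
have : 0 <= 2 * (u + P) * (B + S) by rewrite !mulr_ge0 ?addr_ge0.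
have := sqr_ge0 (u + P); have := sqr_ge0 (B - S) => ? ? ?.
have [/eqP + /eqP] : (u + P) ^+ 2 = 0 /\ (B - S) ^+ 2 = 0 by split; lra.
rewrite !sqrf_eq0 subr_eq0 => /eqP uP0 /eqP ->.
by split=> //; lra.
Qed.

Lemma normal_gIxi_eq0P (R : rcfType) (I xi x : oct R) : Sph I ->
  ((reR x - reR (projI I xi)) ^+ 2 + im_sqnorm x + im_sqnorm (projI I xi)
     + odot (perpI I xi) (perpI I xi)) ^+ 2
    - 4 * im_sqnorm x * im_sqnorm (projI I xi) = 0 <-> SIxi I xi x.
Proof.
move=> SI; split=> [/eqP|[/(projI_idP _ SI) proj_xi /(SetaP _ _ SI)[re_x im_x]]].
  rewrite subr_eq0 => /eqP /sqr_sum4_eq_4mul[||||u0 /odot_perpI_eq0 proj_xi im_x].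
  - exact: sqr_ge0.
  - exact: im_sqnorm_ge0.
  - exact: im_sqnorm_ge0.
  - exact: odot_self_ge0.
  split; first exact/(projI_idP _ SI).
  apply/(SetaP _ _ SI); rewrite -proj_xi; split=> //.
  by apply/eqP; rewrite -subr_eq0 -sqrf_eq0 u0.
have -> : odot (perpI I xi) (perpI I xi) = 0 by apply/odot_perpI_eq0.
by rewrite proj_xi re_x im_x subrr; ring.
Qed.

Theorem lemma2p16 (R : rcfType) (I xi : oct R) :
  Sph I ->
  (* g_{I,xi} is a slice function *)
  (exists F1 F2 : R -> R -> oct R, stem F1 F2 /\ induced (gIxi I xi) F1 F2) /\
  (forall F1 F2 : R -> R -> oct R, stem F1 F2 -> induced (gIxi I xi) F1 F2 ->
    (* (1) *)
    (forall x : oct R,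
       let c := projI I xi in
       let v := onorm (Delta c x) ^+ 2
                + 2 * onorm (perpI I xi) ^+ 2
                    * (onorm x ^+ 2 - 2 * reR x * reR c + onorm c ^+ 2)
                + onorm (perpI I xi) ^+ 4 in
       normalf F1 F2 x = oreal v /\ 0 <= v) /\
    (* (2) *)
    (forall x : oct R, normalf F1 F2 x = ozero R <-> SIxi I xi x)).
Proof.
move=> SI; set c := projI I xi; have g_induced := gIxi_induced I xi.
split; first by exists (gstem1 c (odot xi xi)), (gstem2 c); split=> //; exact: gstem_stem.
move=> F1 F2 _ gF; set P := odot (perpI I xi) (perpI I xi).
have normalfE x : normalf F1 F2 x = oreal
    ((odot x x - 2 * reR x * reR c + odot c c + P) ^+ 2 - 4 * im_sqnorm x * im_sqnorm c).
  have FG a b := induced_uniq SI gF g_induced a b.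
  rewrite (normalf_ext x (fun a b => (FG a b).1) (fun a b => (FG a b).2)).
  by rewrite normalf_gstem (odot_projI_perpI xi SI) addrA.
split=> x.
  rewrite /= !onorm_sqr -[4%N]/(2 * 2)%N exprM onorm_sqr -/P.
  split; first by rewrite normalfE odot_Delta; congr oreal; ring.
  have Q_ge0 : 0 <= (reR x - reR c) ^+ 2 + im_sqnorm x + im_sqnorm c.
    by rewrite !addr_ge0 ?sqr_ge0 ?im_sqnorm_ge0.
  by rewrite odot_re_crossE !addr_ge0 ?mulr_ge0 ?sqr_ge0 ?odot_self_ge0.
rewrite normalfE odot_re_crossE -(normal_gIxi_eq0P xi x SI) /ozero.
by split=> [/oreal_inj|->].
Qed.
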